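(* Let $n\ge 1$, $y\in\mathbb{R}^n$ and $\lambda\ge 0$, and let $$\hat\theta^{(\lambda)}=\operatorname{argmin}_{\theta\in\mathbb{R}^n}\ \frac12\sum_{i=1}^n (y_i-\theta_i)^2+\lambda\sum_{i=1}^{n-1}|\theta_{i+1}-\theta_i|$$ be the (univariate) Total Variation Denoising / Fused Lasso estimator. Then for every $i\in[n]$, $$\max_{J\in\mathcal{I}:\, i\in J}\ \min_{I\in\mathcal{I}:\, i\in I,\ I\subseteq J}\Big[\overline{y}_I+C_{I,J}\frac{2\lambda}{|I|}\Big]\ \le\ \hat\theta^{(\lambda)}_i\ \le\ \min_{J\in\mathcal{I}:\, i\in J}\ \max_{I\in\mathcal{I}:\, i\in I,\ I\subseteq J}\Big[\overline{y}_I-C_{I,J}\frac{2\lambda}{|I|}\Big].$$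
   Context: $[n]=\{1,\dots,n\}$. An interval of $[n]$ is a set $[a:b]=\{a,a+1,\dots,b\}$ with $1\le a\le b\le n$; $\mathcal{I}$ denotes the set of all intervals of $[n]$, and $|I|$ the cardinality of $I$. For $I\subseteq[n]$, $\overline{y}_I$ is the average of the entries $y_j$, $j\in I$. For intervals $I\subseteq J$, with $J=[j_1:j_2]$: $C_{I,J}=1$ if $I$ contains neither endpoint $j_1$ nor $j_2$ of $J$; $C_{I,J}=-1$ if $I=J$; and $C_{I,J}=0$ otherwise. *)

From HB Require Import structures.
From mathcomp Require Import all_boot all_order all_algebra.
From mathcomp Require Import reals.
Set Implicit Arguments. Unset Strict Implicit. Unset Printing Implicit Defensive.
Import Order.TTheory GRing.Theory Num.Theory.
Local Open Scope ring_scope.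

(* Indices are 0-based: [n] = {1..n} is represented by 'I_n = {0..n-1}.
   An interval [a:b] (a <= b) of [n] is represented by the pair (a, b). *)
Definition itv (n : nat) := ('I_n * 'I_n)%type.

Definition in_itv n (j : 'I_n) (I : itv n) : bool := (I.1 <= j <= I.2)%N.

(* [a:b] \subseteq [c:d]  (for nonempty intervals) *)
Definition sub_itv n (I J : itv n) : bool := (J.1 <= I.1)%N && (I.2 <= J.2)%N.

Definition itv_len n (I : itv n) : nat := (I.2 - I.1).+1.

Section Defs.
Variable R : realType.

Definition itv_mean n (y : 'I_n -> R) (I : itv n) : R :=
  (\sum_(j : 'I_n | in_itv j I) y j) / (itv_len I)%:R.

Definition Cc n (I J : itv n) : R :=
  if I == J then -1
  else if ~~ in_itv J.1 I && ~~ in_itv J.2 I then 1 else 0.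

Definition tvd_obj n (y : 'I_n -> R) (lam : R) (theta : 'I_n -> R) : R :=
  2^-1 * (\sum_(i : 'I_n) (y i - theta i) ^+ 2)
  + lam * (\sum_(i : 'I_n | (i.+1 < n)%N) `|theta (insubd i i.+1) - theta i|).

Definition is_tvd_argmin n (y : 'I_n -> R) (lam : R) (theta : 'I_n -> R) : Prop :=
  forall t : 'I_n -> R, tvd_obj y lam theta <= tvd_obj y lam t.

(* The singleton interval [i:i] belongs to every index range below, so it is
   used as the (harmless) initial value of the iterated max / min. *)
Definition lower_bound n (y : 'I_n -> R) (lam : R) (i : 'I_n) : R :=
  let f I J := itv_mean y I + Cc I J * (2 * lam / (itv_len I)%:R) in
  let g J := \big[Num.min / f (i, i) J]_(I : itv n | in_itv i I && sub_itv I J) f I J in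
  \big[Num.max / g (i, i)]_(J : itv n | in_itv i J) g J.

Definition upper_bound n (y : 'I_n -> R) (lam : R) (i : 'I_n) : R :=
  let f I J := itv_mean y I - Cc I J * (2 * lam / (itv_len I)%:R) in
  let g J := \big[Num.max / f (i, i) J]_(I : itv n | in_itv i I && sub_itv I J) f I J in
  \big[Num.min / g (i, i)]_(J : itv n | in_itv i J) g J.
End Defs.

From Pilot Require Import Defs.
From HB Require Import structures.
From mathcomp Require Import all_boot all_order all_algebra.
From mathcomp Require Import reals.
From mathcomp Require Import ring lra zify.
Set Implicit Arguments. Unset Strict Implicit. Unset Printing Implicit Defensive.
Import Order.TTheory GRing.Theory Num.Theory.
Import Defs.
Local Open Scope ring_scope.

(* Fix i in J and let I be the maximal interval with i in I, I inside J, on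
   which theta <= theta_i.  Raising theta by a small e > 0 on I changes the
   objective by -e sum_I (y - theta) + O(e^2) + lam e (c_L + c_R): an end of
   I lying strictly inside J borders a strictly larger value, so that jump
   shrinks (c = -1), while any other end costs at most c = 1.  Optimality
   thus gives sum_I (y - theta) <= lam (c_L + c_R) = -2 lam C_{I,J}, and
   theta <= theta_i on I turns this into mean_I y + 2 lam C_{I,J} / |I| <=
   theta_i, bounding every inner minimum.  The upper bound is the lower bound
   for (-y, -theta). *)

Lemma maximal_run_left (P : pred nat) (lo i : nat) : (lo <= i)%N -> P i ->
  exists a, [/\ (lo <= a <= i)%N, forall j, (a <= j <= i)%N -> P j
            & (lo < a)%N -> ~~ P a.-1].
Proof.
elim: i => [|i IH] loi Pi.
  exists 0; split=> [|j|]; [lia | by move=> /andP[_]; rewrite leqn0 => /eqP-> | lia].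
have [->|lo_i] := eqVneq lo i.+1.
  exists i.+1; split=> [|j ij|]; [lia | by have -> : j = i.+1 by lia | lia].
case Pi': (P i); last first.
  exists i.+1; split=> [|j ij|_]; [lia | by have -> : j = i.+1 by lia | by rewrite Pi'].
have [a [ai run stop]] := IH (ltac:(lia)) Pi'.
exists a; split=> [|j /andP[aj]|//]; first lia.
by rewrite leq_eqVlt ltnS => /orP[/eqP->|ji] //; apply: run; rewrite aj.
Qed.

Lemma maximal_run_right (P : pred nat) (i hi : nat) : (i <= hi)%N -> P i ->
  exists b, [/\ (i <= b <= hi)%N, forall j, (i <= j <= b)%N -> P j
            & (b < hi)%N -> ~~ P b.+1].
Proof.
elim: hi => [|hi IH] ihi Pi.
  exists 0; split=> [|j ij|]; [lia | by have -> : j = i by lia | lia].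
have [Ei|i_hi] := eqVneq i hi.+1.
  exists i; split=> [|j ij|]; [lia | by have -> : j = i by lia | lia].
have [b [ib run stop]] := IH (ltac:(lia)) Pi.
have [b_hi|hi_b|<-{i_hi ihi IH}] := ltngtP b hi.
- by exists b; split=> [|//|_]; [lia | apply: stop].
- lia.
case Pb: (P b.+1); last by exists b; split=> [|//|_]; [lia | rewrite Pb].
exists b.+1; split=> [|j /andP[ij]|]; [lia | | lia].
by rewrite leq_eqVlt ltnS => /orP[/eqP->|jb] //; apply: run; rewrite ij.
Qed.

Lemma maximal_run (P : pred nat) (lo i hi : nat) : (lo <= i <= hi)%N -> P i ->
  exists a b, [/\ (lo <= a <= i)%N, (i <= b <= hi)%N,
    forall j, (a <= j <= b)%N -> P j,
    (lo < a)%N -> ~~ P a.-1 & (b < hi)%N -> ~~ P b.+1].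
Proof.
move=> /andP[loi ihi] Pi.
have [a [ai runL stopL]] := maximal_run_left loi Pi.
have [b [ib runR stopR]] := maximal_run_right ihi Pi.
exists a, b; split=> // j /andP[aj jb].
by have [ji|ij] := leqP j i; [apply: runL; rewrite aj | apply: runR; rewrite jb ltnW].
Qed.

Lemma Cc_itv (R : realType) n (I J : itv n) : (I.1 <= I.2)%N -> sub_itv I J ->
  Cc R I J = (J.1 < I.1)%N%:R + (I.2 < J.2)%N%:R - 1.
Proof.
case: I J => [a b] [c d]; rewrite /Cc /in_itv /sub_itv /= => ab /andP[ca bd].
have [[<- <-]|IJ] := eqVneq (a, b) (c, d); first by rewrite !ltnn /=; lra.
have -> : ~~ (a <= c <= b)%N && ~~ (a <= d <= b)%N = (c < a)%N && (b < d)%N.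
  by apply/idP/idP; lia.
have : (c < a)%N || (b < d)%N.
  apply: contraNT IJ; rewrite negb_or -!leqNgt => /andP[ac db].
  by rewrite xpair_eqE; apply/andP; split; apply/eqP/ord_inj; lia.
by case: (c < a)%N; case: (b < d)%N => //= _; lra.
Qed.

Lemma ler_add_vanishing (R : realFieldType) (x y d K : R) : 0 < d ->
  (forall e, 0 < e -> e <= d -> x <= y + e * K) -> x <= y.
Proof.
move=> d_gt0 small; apply/ler_addgt0Pr => eps eps_gt0.
have K1_gt0 : 0 < `|K| + 1 by have := normr_ge0 K; lra.
pose e := Num.min d (eps / (`|K| + 1)).
have e_gt0 : 0 < e by rewrite lt_min d_gt0 /= divr_gt0.
have eK1 : e * (`|K| + 1) <= eps by rewrite -ler_pdivlMr // ge_min lexx orbT.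
have eK : e * K <= e * `|K| by rewrite ler_wpM2l ?ler_norm ?ltW.
apply: le_trans (small e e_gt0 _) _; first by rewrite ge_min lexx.
rewrite mulrDr mulr1 in eK1; lra.
Qed.

Lemma normD_sub_le (R : realDomainType) (d e : R) (s : bool) : 0 <= e ->
  (s -> d + e <= 0) -> `|d + e| - `|d| <= e * (-1) ^+ s.
Proof.
case: s => /= [e_ge0 /(_ erefl) de|e_ge0 _].
  by rewrite ler0_norm // ler0_norm; lra.
by rewrite mulr1 lerBlDl -{2}(ger0_norm e_ge0) ler_normD.
Qed.

Section Bump.
Variables (R : realType) (n : nat).

Definition tv (t : 'I_n -> R) : R :=
  \sum_(k : 'I_n | (k.+1 < n)%N) `|t (insubd k k.+1) - t k|.

Definition bump (I : itv n) (e : R) (t : 'I_n -> R) (j : 'I_n) : R :=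
  t j + (if in_itv j I then e else 0).

Lemma tvd_objE (y t : 'I_n -> R) (lam : R) :
  tvd_obj y lam t = 2^-1 * \sum_j (y j - t j) ^+ 2 + lam * tv t.
Proof. by []. Qed.

Lemma sqdist_bump (y t : 'I_n -> R) (I : itv n) (e : R) :
  \sum_j (y j - bump I e t j) ^+ 2 = \sum_j (y j - t j) ^+ 2
    - 2 * e * \sum_(j | in_itv j I) (y j - t j) + e ^+ 2 * \sum_(j | in_itv j I) 1.
Proof.
rewrite (big_mkcond (fun j => in_itv j I)) (big_mkcond (fun j => in_itv j I)).
rewrite !mulr_sumr -sumrB -big_split /=; apply: eq_bigr => j _.
by rewrite /bump; case: ifP => _; ring.
Qed.

Lemma sum_in_itv1 (I : itv n) : (I.1 <= I.2)%N ->
  \sum_(j | in_itv j I) (1 : R) = (itv_len I)%:R.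
Proof.
move=> I12; rewrite /itv_len -subSn // -sumr_const_nat.
rewrite (big_nat_widenl _ _ _ _ _ (leq0n _)) (big_nat_widen _ _ _ _ _ (ltn_ord I.2)) big_mkord.
by apply: eq_bigl => j; rewrite /in_itv; lia.
Qed.

End Bump.

Section Edges.
Variables (R : realType) (n : nat).

Lemma sum_edge_into (a : 'I_n.+1) (x : R) :
  \sum_(k : 'I_n.+1 | (k.+1 < n.+1)%N) (if k.+1 == a :> nat then x else 0) =
  if (0 < a)%N then x else 0.
Proof.
rewrite -big_mkcondr; case: posnP => [a0|a_gt0].
  by rewrite big_pred0 // => k; rewrite a0 andbF.
rewrite (big_pred1 (inord a.-1)) // => k /=.
have a_lt := ltn_ord a.
by rewrite -val_eqE /= inordK; [apply/idP/idP; lia | lia].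
Qed.

Lemma sum_edge_out (b : 'I_n.+1) (x : R) :
  \sum_(k : 'I_n.+1 | (k.+1 < n.+1)%N) (if k == b then x else 0) =
  if (b < n)%N then x else 0.
Proof.
rewrite -big_mkcondr; case: ltnP => [b_lt|b_ge].
  by rewrite (big_pred1 b) // => k /=; rewrite -val_eqE /=; apply/idP/idP; lia.
by rewrite big_pred0 // => k; rewrite -val_eqE /=; apply/negP; lia.
Qed.

Variables (t : 'I_n.+1 -> R) (I : itv n.+1) (e : R) (sL sR : bool).
Hypotheses (I12 : (I.1 <= I.2)%N) (e_ge0 : 0 <= e).
Hypothesis dropL : sL -> (0 < I.1)%N /\ t I.1 + e <= t (inord I.1.-1).
Hypothesis riseR : sR -> (I.2 < n)%N /\ t I.2 + e <= t (inord I.2.+1).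

Lemma bump_edge_le (k : 'I_n.+1) : (k.+1 < n.+1)%N ->
  `|bump I e t (insubd k k.+1) - bump I e t k| - `|t (insubd k k.+1) - t k| <=
  e * ((if k.+1 == I.1 :> nat then (-1) ^+ sL else 0) +
       (if k == I.2 then (-1) ^+ sR else 0)).
Proof.
move=> kn; set k' := insubd k k.+1.
have k'E : k' = k.+1 :> nat by rewrite insubdK.
rewrite /bump /in_itv k'E.
have [kI1|kI1] := eqVneq k.+1 I.1.
  have -> : (k == I.2) = false by apply/negP => /eqP kI2; move: kI1; rewrite kI2; lia.
  rewrite ifT ?ifF; [|lia|lia].
  rewrite !addr0 (_ : t k' + e - t k = t k' - t k + e); last by ring.
  apply: normD_sub_le => // /dropL[_].
  have -> : k' = I.1 by apply: ord_inj; rewrite k'E.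
  have -> : k = inord I.1.-1 by rewrite -kI1 /= inord_val.
  lra.
have [kI2|kI2] := eqVneq k I.2.
  have kI2n : k = I.2 :> nat by rewrite kI2.
  rewrite ifF ?ifT; [|lia|lia].
  rewrite add0r addr0 distrC [X in _ - X]distrC.
  rewrite (_ : _ + e - _ = t k - t k' + e); last by ring.
  apply: normD_sub_le => // /riseR[_].
  have -> : k' = inord I.2.+1 by apply: ord_inj; rewrite k'E inordK -kI2.
  rewrite -kI2; lra.
have -> : (I.1 <= k.+1 <= I.2)%N = (I.1 <= k <= I.2)%N.
  by move: kI1 kI2; rewrite -val_eqE /= => kI1 kI2; apply/idP/idP; lia.
by rewrite (_ : forall c, t k' + c - (t k + c) = t k' - t k) ?subrr ?addr0 ?mulr0 // => c; ring.
Qed.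

Lemma tv_bump_le : tv (bump I e t) <= tv t + e * ((-1) ^+ sL + (-1) ^+ sR).
Proof.
rewrite -lerBlDl /tv -sumrB.
apply: le_trans (ler_sum _ (fun k => @bump_edge_le k)) _.
rewrite -mulr_sumr big_split /= sum_edge_into sum_edge_out ler_wpM2l // lerD //.
  by case: posnP => // I1_0; case: sL dropL => [/(_ erefl)[]|_]; rewrite ?I1_0.
by case: ltnP => // I2_n; case: sR riseR => [/(_ erefl)[]|_] //; lia.
Qed.

End Edges.

Section Argmin.
Variables (R : realType) (n : nat) (y t : 'I_n.+1 -> R) (lam : R).
Hypotheses (lam_ge0 : 0 <= lam) (t_opt : is_tvd_argmin y lam t).

Lemma sum_resid_le (I : itv n.+1) (sL sR : bool) : (I.1 <= I.2)%N ->
  (sL -> (0 < I.1)%N /\ t I.1 < t (inord I.1.-1)) ->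
  (sR -> (I.2 < n)%N /\ t I.2 < t (inord I.2.+1)) ->
  \sum_(j | in_itv j I) (y j - t j) <= lam * ((-1) ^+ sL + (-1) ^+ sR).
Proof.
move=> I12 dropL riseR.
set S := \sum_(j | _) _; set m := \sum_(j | in_itv j I) (1 : R).
pose gap (s : bool) (u v : R) := if s then v - u else 1.
have gap_gt0 (s : bool) u v : (s -> u < v) -> 0 < gap s u v.
  by case: s => [/(_ erefl)|_]; rewrite /gap ?subr_gt0 ?ltr01.
pose d := Num.min (gap sL (t I.1) (t (inord I.1.-1))) (gap sR (t I.2) (t (inord I.2.+1))).
have d_gt0 : 0 < d.
  by rewrite lt_min !gap_gt0 // => [/riseR|/dropL] [].
apply: (ler_add_vanishing (K := m / 2) d_gt0) => e e_gt0 e_le.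
have [eL eR] : e <= gap sL (t I.1) (t (inord I.1.-1)) /\ e <= gap sR (t I.2) (t (inord I.2.+1)).
  by move: e_le; rewrite le_min => /andP.
have dropL' : sL -> (0 < I.1)%N /\ t I.1 + e <= t (inord I.1.-1).
  by move=> s; have [I1_gt0 _] := dropL s; move: eL; rewrite /gap s; split => //; lra.
have riseR' : sR -> (I.2 < n)%N /\ t I.2 + e <= t (inord I.2.+1).
  by move=> s; have [I2_lt _] := riseR s; move: eR; rewrite /gap s; split => //; lra.
have tv_le := ler_wpM2l lam_ge0 (tv_bump_le I12 (ltW e_gt0) dropL' riseR').
have := t_opt (bump I e t); rewrite !tvd_objE sqdist_bump -/S -/m => opt.
rewrite -(ler_pM2l e_gt0); nra.
Qed.

Lemma exists_itv_below (i : 'I_n.+1) (J : itv n.+1) : in_itv i J ->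
  exists2 I : itv n.+1, in_itv i I && sub_itv I J &
    itv_mean y I + Cc R I J * (2 * lam / (itv_len I)%:R) <= t i.
Proof.
move=> iJ; have ti : t (inord i) <= t i by rewrite inord_val.
have [a [b [/andP[J1a ai] /andP[ib bJ2] run stopL stopR]]] :=
  maximal_run (P := fun k => t (inord k) <= t i) iJ ti.
have J2_lt := ltn_ord J.2.
pose I : itv n.+1 := (inord a, inord b).
have I1 : I.1 = a :> nat by rewrite inordK //; lia.
have I2 : I.2 = b :> nat by rewrite inordK //; lia.
have I12 : (I.1 <= I.2)%N by rewrite I1 I2 (leq_trans ai).
have IJ : sub_itv I J by rewrite /sub_itv I1 I2 J1a.
have below j : in_itv j I -> t j <= t i.
  by rewrite /in_itv I1 I2 => /run; rewrite inord_val.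
have resid : \sum_(j | in_itv j I) (y j - t j) <= - 2 * lam * Cc R I J.
  apply: le_trans (sum_resid_le (sL := (J.1 < a)%N) (sR := (b < J.2)%N) I12 _ _) _.
  - move=> J1_a; split; first by rewrite I1; lia.
    apply: le_lt_trans (below _ _) _; first by rewrite /in_itv I1 I2 leqnn; lia.
    by rewrite I1 ltNge stopL.
  - move=> b_J2; split; first by rewrite I2; lia.
    apply: le_lt_trans (below _ _) _; first by rewrite /in_itv I1 I2 leqnn; lia.
    by rewrite I2 ltNge stopR.
  rewrite Cc_itv // I1 I2.
  by case: (J.1 < a)%N; case: (b < J.2)%N; rewrite /= ?expr0 ?expr1; lra.
have sum_t : \sum_(j | in_itv j I) t j <= t i * (itv_len I)%:R.
  by rewrite -sum_in_itv1 // mulr_sumr; apply: ler_sum => j /below; rewrite mulr1.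
have len_gt0 : 0 < (itv_len I)%:R :> R by rewrite ltr0n.
exists I; first by rewrite IJ andbT /in_itv I1 I2 ai.
rewrite /itv_mean mulrA -mulrDl ler_pdivrMr //.
by move: resid; rewrite sumrB; lra.
Qed.
End Argmin.

Section Reflection.
Variables (R : realType) (n : nat) (y : 'I_n -> R) (lam : R).

Lemma tvd_obj_opp (u v : 'I_n -> R) : (forall j, v j = - u j) ->
  tvd_obj (fun j => - y j) lam v = tvd_obj y lam u.
Proof.
move=> vE; rewrite /tvd_obj; congr (_ * _ + _ * _); apply: eq_bigr => j _;
  by rewrite !vE -?opprD ?normrN ?sqrrN // -opprB normrN.
Qed.

Lemma tvd_argmin_opp (t : 'I_n -> R) : is_tvd_argmin y lam t ->
  is_tvd_argmin (fun j => - y j) lam (fun j => - t j).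
Proof.
move=> t_opt u; rewrite (tvd_obj_opp (u := t)) // (tvd_obj_opp (u := fun j => - u j)) //.
by move=> j; rewrite opprK.
Qed.

Lemma itv_mean_opp (I : itv n) : itv_mean (fun j => - y j) I = - itv_mean y I.
Proof. by rewrite /itv_mean sumrN mulNr. Qed.

End Reflection.

Section Bounds.
Variables (R : realType) (n : nat) (y : 'I_n -> R) (lam : R) (i : 'I_n) (x : R).

Let in_itv_refl : in_itv i (i, i). Proof. by rewrite /in_itv leqnn. Qed.

Lemma lower_bound_le :
  (forall J, in_itv i J -> exists2 I, in_itv i I && sub_itv I J &
     itv_mean y I + Cc R I J * (2 * lam / (itv_len I)%:R) <= x) ->
  lower_bound y lam i <= x.
Proof.
move=> below; apply: bigmax_le => [|J iJ];
  [have [I iIJ le] := below _ in_itv_refl | have [I iIJ le] := below J iJ];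
  exact: (bigmin_inf I).
Qed.

Lemma upper_bound_ge :
  (forall J, in_itv i J -> exists2 I, in_itv i I && sub_itv I J &
     x <= itv_mean y I - Cc R I J * (2 * lam / (itv_len I)%:R)) ->
  x <= upper_bound y lam i.
Proof.
move=> above; apply: le_bigmin => [|J iJ];
  [have [I iIJ le] := above _ in_itv_refl | have [I iIJ le] := above J iJ];
  exact: (bigmax_sup I).
Qed.

End Bounds.

Theorem theorem1 (R : realType) (n : nat) (y : 'I_n -> R) (lam : R)
    (theta : 'I_n -> R) :
  (0 < n)%N -> 0 <= lam -> is_tvd_argmin y lam theta ->
  forall i : 'I_n, lower_bound y lam i <= theta i <= upper_bound y lam i.
Proof.
case: n y theta => // n y t _ lam_ge0 t_opt i; apply/andP; split.
  by apply: lower_bound_le => J; apply: exists_itv_below.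
apply: upper_bound_ge => J iJ.
have [I iIJ le] := exists_itv_below lam_ge0 (tvd_argmin_opp t_opt) iJ.
by exists I => //; move: le; rewrite itv_mean_opp; lra.
Qed.
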